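(* Let $K$ be a field of characteristic $0$, let $E$ be the infinite-dimensional unitary Grassmann algebra over $K$ with even part $E_0$, let $A=\begin{pmatrix} E_0 & E\\ 0 & E\end{pmatrix}$, and let $F_n(A)=K\langle x_1,\dots,x_n\rangle/(K\langle x_1,\dots,x_n\rangle\cap T(A))$. Let $n\geq 2$ be even and $m\geq n+3$. Then the polynomial \[f_{m,n+1}^{(4)}=\sum_{\sigma\in S_{n+1}}(-1)^{\sigma}[x_2,x_1,x_{\sigma(1)},x_1,\dots,x_1][x_{\sigma(2)},x_{\sigma(3)}]\cdots[x_{\sigma(n)},x_{\sigma(n+1)}],\] where each first factor is the left-normed commutator of length $m-n$ consisting of $x_2,x_1,x_{\sigma(1)}$ followed by $m-n-3$ copies of $x_1$, is not a polynomial identity of $F_n(A)$.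
   Context: All algebras are associative and unitary over $K$; $T(A)$ is the ideal of polynomial identities of $A$. $E$ is generated by anticommuting $e_1,e_2,\dots$ and $E_0$ is the span of basis products of even length. Commutators: $[a,b]=ab-ba$, $[a_1,\dots,a_k]=[[a_1,\dots,a_{k-1}],a_k]$; $(-1)^\sigma$ is the sign of $\sigma$. The polynomial has total degree $m$. *)

From HB Require Import structures.
From mathcomp Require Import all_boot all_order all_algebra all_fingroup.
Set Implicit Arguments. Unset Strict Implicit. Unset Printing Implicit Defensive.
Import GRing.Theory.
Local Open Scope ring_scope.

(* The variable x_i is [NCVar i] (i >= 1). *)
Inductive ncterm (K : Type) : Type :=
| NCVar of nat
| NCConst of K
| NCAdd of ncterm K & ncterm K
| NCMul of ncterm K & ncterm K.
Arguments NCVar {K}.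

Fixpoint nceval (K : Type) (R : pzRingType) (c : K -> R) (v : nat -> R)
  (t : ncterm K) : R :=
  match t with
  | NCVar i => v i
  | NCConst k => c k
  | NCAdd t1 t2 => nceval c v t1 + nceval c v t2
  | NCMul t1 t2 => nceval c v t1 * nceval c v t2
  end.

Fixpoint ncsubst (K : Type) (g : nat -> ncterm K) (t : ncterm K) : ncterm K :=
  match t with
  | NCVar i => g i
  | NCConst k => NCConst k
  | NCAdd t1 t2 => NCAdd (ncsubst g t1) (ncsubst g t2)
  | NCMul t1 t2 => NCMul (ncsubst g t1) (ncsubst g t2)
  end.

Fixpoint ncvars_in (K : Type) (n : nat) (t : ncterm K) : bool :=
  match t with
  | NCVar i => (1 <= i <= n)%N
  | NCConst _ => true
  | NCAdd t1 t2 => ncvars_in n t1 && ncvars_in n t2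
  | NCMul t1 t2 => ncvars_in n t1 && ncvars_in n t2
  end.

Section Terms.
Variable K : pzRingType.
Definition ncopp (t : ncterm K) : ncterm K := NCMul (NCConst (-1)) t.
Definition nccomm (a b : ncterm K) : ncterm K :=
  NCAdd (NCMul a b) (ncopp (NCMul b a)).
Definition nclcomm (a : ncterm K) (s : seq (ncterm K)) : ncterm K :=
  foldl nccomm a s.

(* A permutation s of 'I_(n+1) = {0..n} encodes sigma via
   sigma(j) = (s (j-1)) + 1 for j in 1..n+1. *)
Definition sig_var (n : nat) (s : 'S_n.+1) (j : nat) : ncterm K :=
  NCVar (nat_of_ord (s (inord j.-1))).+1.

Definition f4 (m n : nat) : ncterm K :=
  \big[@NCAdd K / NCConst 0]_(s : 'S_n.+1)
    NCMul (NCConst ((-1) ^+ odd_perm s))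
      (NCMul
        (nclcomm (NCVar 2) (NCVar 1 :: sig_var s 1 :: nseq (m - n - 3) (NCVar 1)))
        (\big[@NCMul K / NCConst 1]_(k < n./2)
            nccomm (sig_var s (2 * k + 2)) (sig_var s (2 * k + 3)))).
End Terms.

Section Grassmann.
Variables (K : fieldType) (E : algType K).

Definition gmon (e : nat -> E) (s : seq nat) : E := \prod_(i <- s) e i.

Definition is_grassmann (e : nat -> E) : Prop :=
  [/\ forall i j, e i * e j = - (e j * e i),
      forall x : E, exists (S : seq (seq nat)) (c : seq nat -> K),
        all (sorted ltn) S /\ x = \sum_(s <- S) c s *: gmon e s
    & forall (S : seq (seq nat)) (c : seq nat -> K),
        uniq S -> all (sorted ltn) S ->
        \sum_(s <- S) c s *: gmon e s = 0 -> forall s, s \in S -> c s = 0].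

Definition grass_even (e : nat -> E) (x : E) : Prop :=
  exists (S : seq (seq nat)) (c : seq nat -> K),
    [/\ all (sorted ltn) S, all (fun s => ~~ odd (size s)) S &
        x = \sum_(s <- S) c s *: gmon e s].

(* A = [[E_0, E], [0, E]] inside 2x2 matrices over E. *)
Definition inA (e : nat -> E) (M : 'M[E]_2) : Prop :=
  M ord_max ord0 = 0 /\ grass_even e (M ord0 ord0).

Definition evalA (v : nat -> 'M[E]_2) (t : ncterm K) : 'M[E]_2 :=
  nceval (fun k : K => (k%:A)%:M) v t.

Definition in_TA (e : nat -> E) (t : ncterm K) : Prop :=
  forall v : nat -> 'M[E]_2, (forall i, inA e (v i)) -> evalA v t = 0.

(* f is a polynomial identity of F_n(A) = K<x_1..x_n>/(K<x_1..x_n> cap T(A)):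
   for all elements u_i = class of g_i (g_i in K<x_1..x_n>) of F_n(A),
   f(u_1, u_2, ...) = class of f(g_1, g_2, ...) is zero, i.e. lies in T(A). *)
Definition PI_Fn (e : nat -> E) (n : nat) (f : ncterm K) : Prop :=
  forall g : nat -> ncterm K, (forall i, ncvars_in n (g i)) ->
    in_TA e (ncsubst g f).
End Grassmann.

From HB Require Import structures.
From mathcomp Require Import all_boot all_order all_algebra all_fingroup.
From mathcomp Require Import zify.
Set Implicit Arguments. Unset Strict Implicit. Unset Printing Implicit Defensive.
Import GRing.Theory.
Local Open Scope ring_scope.

(* Since F_n(A) has only n generators, replace x_{n+1} by 1 - x_1^2 and evaluate
   in A at x_1 = diag(-1, e_1), x_2 = [[0, 1], [0, e_2]], x_j = diag(0, e_j) for
   3 <= j <= n; then x_{n+1} becomes diag(0, 1).  All matrices are upper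
   triangular and the first factor has zero (1,1) entry, so the (1,2) entry of
   the sigma-th term is the (1,2) entry of the first factor times the product of
   the lower-right entries of the commutators [x_sigma(2i), x_sigma(2i+1)].
   That product vanishes unless sigma(1) = n+1: otherwise x_{n+1}, whose
   lower-right entry 1 is central, sits in one of the commutators.  When
   sigma(1) = n+1 the first factor contributes (1 + e_1)^(m-n-2), which fixes
   e_1 ... e_n, and the commutators of the anticommuting e's give
   2^(n/2) sgn(sigma) e_1 ... e_n.
   So the (1,2) entry of the evaluation is 2^(n/2) n! e_1 ... e_n, which is
   nonzero in characteristic 0. *)

Definition rcomm (R : pzRingType) (a b : R) := a * b - b * a.
Definition lrcomm (R : pzRingType) (a : R) (l : seq R) := foldl (@rcomm R) a l.

Lemma rcomm0r (R : pzRingType) (x : R) : rcomm 0 x = 0.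
Proof. by rewrite /rcomm mul0r mulr0 subrr. Qed.

Lemma rcomm1r (R : pzRingType) (x : R) : rcomm 1 x = 0.
Proof. by rewrite /rcomm mul1r mulr1 subrr. Qed.

Lemma rcommr1 (R : pzRingType) (x : R) : rcomm x 1 = 0.
Proof. by rewrite /rcomm mul1r mulr1 subrr. Qed.

Lemma nceval_subst (K : Type) (R : pzRingType) (c : K -> R) (v : nat -> R)
    (g : nat -> ncterm K) (t : ncterm K) :
  nceval c v (ncsubst g t) = nceval c (fun i => nceval c v (g i)) t.
Proof. by elim: t => //= t1 -> t2 ->. Qed.

Section Evaluation.
Variables (K R : pzRingType) (c : {rmorphism K -> R}) (w : nat -> R).

Lemma nceval_comm a b :
  nceval c w (nccomm a b) = rcomm (nceval c w a) (nceval c w b).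
Proof. by rewrite /= rmorphN1 mulN1r. Qed.

Lemma nceval_lcomm a l :
  nceval c w (nclcomm a l) = lrcomm (nceval c w a) (map (nceval c w) l).
Proof. by elim: l a => //= t l IH a; rewrite -nceval_comm -IH. Qed.

Lemma nceval_sum (I : Type) (r : seq I) (F : I -> ncterm K) :
  nceval c w (\big[@NCAdd K/NCConst 0]_(i <- r) F i) =
  \sum_(i <- r) nceval c w (F i).
Proof. by apply: (big_morph (nceval c w)) => //=; rewrite rmorph0. Qed.

Lemma nceval_prod (I : Type) (r : seq I) (F : I -> ncterm K) :
  nceval c w (\big[@NCMul K/NCConst 1]_(i <- r) F i) =
  \prod_(i <- r) nceval c w (F i).
Proof. by apply: (big_morph (nceval c w)) => //=; rewrite rmorph1. Qed.

Lemma nceval_f4 m n :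
  nceval c w (f4 K m n) = \sum_(s : 'S_n.+1) (-1) ^+ odd_perm s *
    (lrcomm (w 2%N) [seq w j | j <- [:: 1, (s ord0).+1 & nseq (m - n - 3) 1]%N] *
     \prod_(k < n./2) rcomm (w (s (inord k.*2.+1)).+1) (w (s (inord k.*2.+2)).+1)).
Proof.
rewrite nceval_sum; apply: eq_big => // s _.
have nceval_mul a b : nceval c w (NCMul a b) = nceval c w a * nceval c w b by [].
rewrite !nceval_mul nceval_lcomm nceval_prod /= rmorph_sign !map_nseq.
have -> : inord 0 = ord0 :> 'I_n.+1 by apply/val_inj; rewrite /= inordK.
congr (_ * (_ * _)); apply: eq_bigr => k _.
by rewrite rmorphN1 mulN1r -mul2n addn2 addn3.
Qed.
End Evaluation.

Section UpperTriangular.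
Variable R : pzRingType.

Definition utmx (a b c : R) : 'M[R]_2 := \matrix_(i, j)
  if i == ord0 then (if j == ord0 then a else b) else (if j == ord0 then 0 else c).

Lemma utmx00 a b c : utmx a b c ord0 ord0 = a. Proof. by rewrite mxE. Qed.
Lemma utmx01 a b c : utmx a b c ord0 ord_max = b. Proof. by rewrite mxE. Qed.
Lemma utmx10 a b c : utmx a b c ord_max ord0 = 0. Proof. by rewrite mxE. Qed.

Lemma utmx_mul a b c a' b' c' :
  utmx a b c * utmx a' b' c' = utmx (a * a') (a * b' + b * c') (c * c').
Proof.
apply/matrixP => i j; rewrite -mulmxE !mxE !big_ord_recl big_ord0 !mxE /=.
by case: (i == ord0); case: (j == ord0); rewrite ?(mulr0, mul0r, addr0, add0r).
Qed.

Lemma utmxB a b c a' b' c' :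
  utmx a b c - utmx a' b' c' = utmx (a - a') (b - b') (c - c').
Proof.
by apply/matrixP => i j; rewrite !mxE; case: (i == ord0); case: (j == ord0);
  rewrite ?subr0.
Qed.

Lemma utmx1 : utmx 1 0 1 = 1.
Proof.
apply/matrixP => i j; rewrite !mxE.
by case: i => [[|[|]]] // ?; case: j => [[|[|]]].
Qed.

Lemma rcomm_utmx a b c a' b' c' :
  rcomm (utmx a b c) (utmx a' b' c') =
  utmx (rcomm a a') (a * b' + b * c' - (a' * b + b' * c)) (rcomm c c').
Proof. by rewrite /rcomm !utmx_mul utmxB. Qed.

Lemma utmxE (M : 'M[R]_2) :
  M ord_max ord0 = 0 -> M = utmx (M ord0 ord0) (M ord0 ord_max) (M ord_max ord_max).
Proof.
move=> M10; apply/matrixP => i j; rewrite mxE.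
by case: i => [[|[|]]] // ?; case: j => [[|[|]]] // ?;
  rewrite -?M10; congr (M _ _); apply: val_inj.
Qed.

Lemma lrcomm_utmx0 (ms : seq 'M[R]_2) (x y : R) :
    all (fun M : 'M[R]_2 => M ord_max ord0 == 0) ms ->
  exists x' y', lrcomm (utmx 0 x y) ms = utmx 0 x' y'.
Proof.
elim: ms x y => [|M ms IH] x y /=; first by exists x, y.
case/andP => /eqP/utmxE -> ?.
by rewrite rcomm_utmx rcomm0r; apply: IH.
Qed.

Lemma prod_utmx (I : Type) (r : seq I) (a b c : I -> R) :
  let P := \prod_(i <- r) utmx (a i) (b i) (c i) in
  P = utmx (\prod_(i <- r) a i) (P ord0 ord_max) (\prod_(i <- r) c i).
Proof.
elim: r => [|i r IH] /=; first by rewrite !big_nil -utmx1 utmx01.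
by rewrite !big_cons IH utmx_mul utmx01.
Qed.

Lemma lrcomm_utmx_nseq x b k :
  lrcomm (utmx 0 b 0) (nseq k (utmx (-1) 0 x)) = utmx 0 (b * (1 + x) ^+ k) 0.
Proof.
elim: k b => [|k IH] b /=; first by rewrite expr0 mulr1.
rewrite rcomm_utmx !rcomm0r !(mulr0, mul0r, addr0, add0r, mulN1r, subr0, opprK).
by rewrite IH exprS mulrA mulrDr mulr1 addrC.
Qed.

Lemma mulr_sign_mxE (b : bool) (M : 'M[R]_2) i j :
  ((-1) ^+ b * M) i j = (-1) ^+ b * M i j.
Proof. by case: b; rewrite ?mul1r // !mulN1r mxE. Qed.
End UpperTriangular.

Section LiftPerm.
Variable n : nat.
Implicit Types (i j : 'I_n.+1) (s : 'S_n.+1).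

Definition unlift_perm_fun i s (k : 'I_n) : 'I_n :=
  odflt k (unlift (s i) (s (lift i k))).

Lemma unlift_perm_funK i s k : lift (s i) (unlift_perm_fun i s k) = s (lift i k).
Proof.
rewrite /unlift_perm_fun; have := neq_lift i k.
by rewrite -(can_eq (permK s)) => /unlift_some[] ? ? ->.
Qed.

Lemma unlift_perm_fun_inj i s : injective (unlift_perm_fun i s).
Proof.
apply: can_inj (unlift_perm_fun (s i) s^-1%g) _ => k.
by rewrite {1}/unlift_perm_fun unlift_perm_funK !permK liftK.
Qed.

Definition unlift_perm i s : 'S_n := perm (@unlift_perm_fun_inj i s).

Lemma lift_unlift_perm i s : lift_perm i (s i) (unlift_perm i s) = s.
Proof.
apply/permP => k; case: (unliftP i k) => [k'|] ->; rewrite ?lift_perm_id //.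
by rewrite lift_perm_lift permE unlift_perm_funK.
Qed.

Lemma unlift_lift_perm i j (s : 'S_n) : unlift_perm i (lift_perm i j s) = s.
Proof.
apply/permP => k.
by rewrite permE /unlift_perm_fun lift_perm_lift lift_perm_id liftK.
Qed.

Lemma sum_lift_perm (V : nmodType) i j (F : 'S_n.+1 -> V) :
  \sum_(s : 'S_n.+1 | s i == j) F s = \sum_(s : 'S_n) F (lift_perm i j s).
Proof.
rewrite (reindex (lift_perm i j)); last first.
  exists (unlift_perm i) => [s _ | s /eqP <-]; first exact: unlift_lift_perm.
  exact: lift_unlift_perm.
by apply: eq_bigl => s; rewrite lift_perm_id eqxx.
Qed.

Lemma lift_perm_inord (s : 'S_n) (k : 'I_n) :
  lift_perm ord0 ord_max s (inord k.+1) = s k :> nat.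
Proof.
have -> : inord k.+1 = lift ord0 k :> 'I_n.+1.
  by apply/val_inj; rewrite /= inordK ?ltnS.
by rewrite lift_perm_lift /= /bump leqNgt ltn_ord.
Qed.
End LiftPerm.

Section Anticommuting.
Variables (R : pzRingType) (f : nat -> R).
Hypothesis f_anti : forall i j, f i * f j = - (f j * f i).

Lemma mul_prod_anticomm a j :
  f a * \prod_(0 <= k < j) f k = (-1) ^+ j * (\prod_(0 <= k < j) f k * f a).
Proof.
elim: j => [|j IH]; first by rewrite big_geq // expr0 !mul1r mulr1.
rewrite big_nat_recr //= mulrA IH -!mulrA f_anti.
by rewrite exprS mulN1r mulNr !mulrN.
Qed.

Lemma mul_prod_bump j N : (j <= N)%N ->
  f j * \prod_(k < N) f (bump j k) = (-1) ^+ j * \prod_(i < N.+1) f i.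
Proof.
move=> jN; rewrite -(big_mkord xpredT (f \o bump j)) -(big_mkord xpredT f).
rewrite (big_cat_nat (leq0n j) jN) (big_cat_nat (leq0n j) (leqW jN)) /=.
rewrite [X in _ = _ * (_ * X)]big_ltn ?ltnS // mulrA.
rewrite (eq_big_nat _ _ (F1 := f \o bump j) (F2 := f)); last first.
  by move=> k /andP[_ kj]; rewrite /= /bump leqNgt kj.
rewrite mul_prod_anticomm -!mulrA; congr (_ * (_ * (_ * _))).
by rewrite big_add1 /=; apply: eq_big_nat => k /andP[jk _]; rewrite /= /bump jk.
Qed.
End Anticommuting.

Lemma prod_perm_anticomm (R : pzRingType) N (f : nat -> R) (s : 'S_N) :
    (forall i j, f i * f j = - (f j * f i)) ->
  \prod_(i < N) f (s i) = (-1) ^+ odd_perm s * \prod_(i < N) f i.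
Proof.
elim: N f s => [|N IH] f s f_anti.
  have -> : s = 1%g by apply/permP => -[].
  by rewrite odd_perm1 mul1r !big_ord0.
rewrite -(lift_unlift_perm ord0 s); move: (s ord0) (unlift_perm _ _) => j s'.
rewrite big_ord_recl lift_perm_id odd_lift_perm /= signr_addb signr_odd.
rewrite (eq_bigr (fun k => f (bump j (s' k)))) => [|k _]; last first.
  by rewrite lift_perm_lift.
rewrite (IH (f \o bump j)) /= => [|a b]; last exact: f_anti.
rewrite mulrA commr_sign -mulrA mul_prod_bump -1?ltnS //.
by rewrite mulrA (commr_sign ((-1) ^+ s')).
Qed.

Lemma prod_rcomm_pairs (R : pzRingType) (F : nat -> R) h :
    (forall k, (k < h)%N -> F k.*2.+1 * F k.*2 = - (F k.*2 * F k.*2.+1)) ->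
  \prod_(k < h) rcomm (F k.*2) (F k.*2.+1) = (\prod_(i < h.*2) F i) *+ 2 ^ h.
Proof.
elim: h => [|h IH] F_anti; first by rewrite !big_ord0.
rewrite big_ord_recr IH => [|k kh]; last exact/F_anti/ltnW.
rewrite doubleS !big_ord_recr /= /rcomm F_anti // opprK -mulr2n.
by rewrite mulrnAr mulrnAl -mulrnA -expnSr !mulrA.
Qed.

Lemma prod_rcomm_pairs_eq0 (R : pzRingType) (F : nat -> R) h j :
  (j < h.*2)%N -> F j = 1 -> \prod_(k < h) rcomm (F k.*2) (F k.*2.+1) = 0.
Proof.
move=> + Fj; elim: h => // h IH jh; rewrite big_ord_recr /=.
have [/IH -> | hj] := ltnP j h.*2; first by rewrite mul0r.
suff -> : rcomm (F h.*2) (F h.*2.+1) = 0 by rewrite mulr0.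
have [ej | ej] : j = h.*2 \/ j = h.*2.+1 by lia.
all: by rewrite -ej Fj ?rcomm1r ?rcommr1.
Qed.

Lemma exp1Dl_mul (R : pzRingType) (x y : R) k : x * y = 0 -> (1 + x) ^+ k * y = y.
Proof.
move=> xy; elim: k => [|k IH]; first by rewrite expr0 mul1r.
by rewrite exprSr -mulrA mulrDl mul1r xy addr0 IH.
Qed.

(* The value of x_j at the point above; at j = n+1 it is the value of 1 - x_1^2. *)
Definition witness_mx (E : pzRingType) (e : nat -> E) (n j : nat) : 'M[E]_2 :=
  utmx (if j == 1%N then -1 else 0) (if j == 2%N then 1 else 0)
       (if j == n.+1 then 1 else e j).

Section WitnessValues.
Variables (E : pzRingType) (e : nat -> E) (n : nat).
Hypothesis n_gt1 : (1 < n)%N.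

Lemma witness_mx1 : witness_mx e n 1 = utmx (-1) 0 (e 1).
Proof.
by rewrite /witness_mx [_ == n.+1]eqSS (@eq_sym _ 0%N n) (gtn_eqF (ltnW n_gt1)).
Qed.

Lemma witness_mx2 : witness_mx e n 2 = utmx 0 1 (e 2).
Proof.
by rewrite /witness_mx [_ == n.+1]eqSS (@eq_sym _ 1%N n) (gtn_eqF n_gt1).
Qed.

Lemma witness_mx_last : witness_mx e n n.+1 = utmx 0 0 1.
Proof.
by rewrite /witness_mx eqxx !eqSS (gtn_eqF n_gt1) (gtn_eqF (ltnW n_gt1)).
Qed.
End WitnessValues.

Section Witness.
Variables (E : pzRingType) (e : nat -> E) (n k : nat) (w : nat -> 'M[E]_2).
Hypotheses (e_anti : forall i j, e i * e j = - (e j * e i))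
           (e_sqr0 : forall i, e i * e i = 0)
           (n_gt1 : (1 < n)%N) (n_even : ~~ odd n)
           (w_val : forall j, (0 < j <= n.+1)%N -> w j = witness_mx e n j).

Let corner j := if j == n.+1 then 1 else e j.
Let rho (s : 'S_n.+1) i := corner (s (inord i.+1)).+1.
Let X (s : 'S_n.+1) := lrcomm (w 2%N) [seq w j | j <- [:: 1, (s ord0).+1 & nseq k 1]%N].
Let Q (s : 'S_n.+1) :=
  \prod_(i < n./2) rcomm (w (s (inord i.*2.+1)).+1) (w (s (inord i.*2.+2)).+1).

Lemma w_perm_val (s : 'S_n.+1) i : w (s i).+1 = witness_mx e n (s i).+1.
Proof. by rewrite w_val //= ltn_ord. Qed.

Lemma witness_X_utmx0 s : exists x y, X s = utmx 0 x y.
Proof.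
rewrite /X; set js := [:: _, _ & _].
have -> : [seq w j | j <- js] = map (witness_mx e n) js.
  apply/eq_in_map => j; rewrite !inE => /or3P[/eqP -> | /eqP -> | /nseqP[-> _]].
  - by rewrite w_val.
  - exact: w_perm_val.
  - by rewrite w_val.
rewrite w_val; last by rewrite /= ltnS ltnW.
apply: lrcomm_utmx0.
by apply/allP => M /mapP[j _ ->]; rewrite utmx10.
Qed.

Lemma witness_term_entry s : (X s * Q s) ord0 ord_max =
  X s ord0 ord_max * \prod_(i < n./2) rcomm (rho s i.*2) (rho s i.*2.+1).
Proof.
have [x [y ->]] := witness_X_utmx0 s.
rewrite /Q; under eq_bigr do rewrite !w_perm_val rcomm_utmx.
by rewrite prod_utmx utmx_mul !utmx01 mul0r add0r.
Qed.

Lemma witness_pairs_eq0 (s : 'S_n.+1) : s ord0 != ord_max ->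
  \prod_(i < n./2) rcomm (rho s i.*2) (rho s i.*2.+1) = 0.
Proof.
move=> s0; set i := (s^-1)%g ord_max.
have i_gt0 : (0 < i)%N.
  by rewrite lt0n; apply: contra s0 => /eqP i0; rewrite -(permKV s ord_max) -/i
    (_ : i = ord0) //; apply: val_inj.
apply: (prod_rcomm_pairs_eq0 (j := i.-1)).
  by rewrite even_halfK // -ltnS prednK.
by rewrite /rho prednK // inord_val permKV /corner eqxx.
Qed.

Lemma rho_lift (s : 'S_n) j : (j < n)%N ->
  let s1 := lift_perm ord0 ord_max s in rho s1 j = e (s1 (inord j.+1)).+1.
Proof.
move=> jn s1; rewrite /rho /corner eqSS ifF //; apply/negbTE.
have j1_neq0 : inord j.+1 != ord0 :> 'I_n.+1 by rewrite -(inj_eq val_inj) /= inordK.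
have : s1 (inord j.+1) != s1 ord0 by rewrite (inj_eq perm_inj).
by rewrite lift_perm_id -(inj_eq val_inj).
Qed.

Lemma witness_pairs_lift (s : 'S_n) :
  let s1 := lift_perm ord0 ord_max s in
  \prod_(i < n./2) rcomm (rho s1 i.*2) (rho s1 i.*2.+1) =
  ((-1) ^+ odd_perm s * \prod_(i < n) e i.+1) *+ 2 ^ n./2.
Proof.
move=> s1; have n_half := even_halfK n_even.
rewrite prod_rcomm_pairs => [|i i_lt]; last first.
  have lt_n : (i.*2.+1 < n)%N by rewrite -n_half -doubleS leq_double.
  by rewrite (rho_lift _ lt_n) (rho_lift _ (ltnW lt_n)).
rewrite n_half -(prod_perm_anticomm (f := fun x => e x.+1)) => [|a b]; last exact: e_anti.
congr (_ *+ _); apply: eq_bigr => i _.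
by rewrite (rho_lift _ (ltn_ord i)) lift_perm_inord.
Qed.

Lemma witness_X_lift (s : 'S_n) :
  X (lift_perm ord0 ord_max s) ord0 ord_max = (1 + e 1) ^+ k.+1.
Proof.
rewrite /X lift_perm_id /= map_nseq !w_val //= ?ltnS 1?ltnW //.
rewrite witness_mx1 // witness_mx2 // witness_mx_last //.
rewrite !rcomm_utmx !rcomm0r rcommr1 lrcomm_utmx_nseq utmx01.
by rewrite !(mul0r, mulr0, mul1r, mulr1, add0r, addr0, subr0, mulN1r, opprK) addrC exprS.
Qed.

Lemma f4_witness_entry :
  (\sum_(s : 'S_n.+1) (-1) ^+ odd_perm s *
    (lrcomm (w 2%N) [seq w j | j <- [:: 1, (s ord0).+1 & nseq k 1]%N] *
     \prod_(i < n./2) rcomm (w (s (inord i.*2.+1)).+1) (w (s (inord i.*2.+2)).+1)))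
    ord0 ord_max = (\prod_(i < n) e i.+1) *+ (2 ^ n./2 * n`!).
Proof.
set P := \prod_(i < n) e i.+1.
have e1P : e 1 * P = 0.
  rewrite /P -(big_mkord xpredT (fun i => e i.+1)) big_ltn 1?ltnW //.
  by rewrite mulrA e_sqr0 mul0r.
rewrite summxE (bigID (fun s : 'S_n.+1 => s ord0 == ord_max)) /=.
rewrite [X in _ + X]big1 ?addr0 => [|s s0]; last first.
  by rewrite mulr_sign_mxE witness_term_entry witness_pairs_eq0 // !mulr0.
rewrite sum_lift_perm (eq_bigr (fun=> P *+ 2 ^ n./2)) => [|s _].
  by rewrite sumr_const card_Sn -mulrnA.
rewrite mulr_sign_mxE witness_term_entry witness_X_lift witness_pairs_lift.
rewrite odd_lift_perm /= (negbTE n_even) /= !mulrnAr -/P.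
by rewrite [(1 + _) ^+ _ * _]mulrA commr_sign -[(_ * _) * P]mulrA exp1Dl_mul // signrMK.
Qed.
End Witness.

Section Grassmann.
Variables (K : fieldType) (E : algType K) (e : nat -> E).
Hypotheses (ch0 : [pchar K] =i pred0) (grass : is_grassmann e).

Lemma mulrn_eq0_pchar0 (x : E) N : (x *+ N == 0) = (N == 0%N) || (x == 0).
Proof. by move/pcharf0P: ch0 => natr_eq0; rewrite -scaler_nat scaler_eq0 natr_eq0. Qed.

Lemma grass_sqr0 i : e i * e i = 0.
Proof.
have [e_anti _ _] := grass.
by apply/eqP; rewrite -[_ == 0](mulrn_eq0_pchar0 _ 2) mulr2n {1}e_anti addNr.
Qed.

Lemma grass_even_scalar (k : K) : grass_even e k%:A.
Proof.
by exists [:: [::]], (fun _ => k); split; rewrite //= big_seq1 /gmon big_nil.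
Qed.

Lemma grass_gmon_neq0 (s : seq nat) : sorted ltn s -> gmon e s != 0.
Proof.
have [_ _ indep] := grass; move=> s_sorted; apply/eqP => s0.
have := indep [:: s] (fun _ => 1) erefl; rewrite /= s_sorted big_seq1 scale1r s0.
by move=> /(_ isT erefl s (mem_head _ _)) /eqP; rewrite oner_eq0.
Qed.

Lemma grass_prod_neq0 n : \prod_(i < n) e i.+1 != 0.
Proof.
have := grass_gmon_neq0 (iota_ltn_sorted 1 n).
by rewrite /gmon (iotaDl 1 0) big_map -{1}(subn0 n) big_mkord.
Qed.
End Grassmann.

Theorem lemma3p8 (K : fieldType) (E : algType K) (e : nat -> E) (n m : nat) :
  [pchar K] =i pred0 ->
  is_grassmann e ->
  (2 <= n)%N -> ~~ odd n -> (n + 3 <= m)%N ->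
  ~ PI_Fn e n (f4 K m n).
Proof.
move=> ch0 grass n_gt1 n_even _ PI; have [e_anti _ _] := grass.
pose c : {rmorphism K -> 'M[E]_2} := scalar_mx \o in_alg E.
pose v := witness_mx e n.
pose g j : ncterm K :=
  if j == n.+1 then NCAdd (NCConst 1) (ncopp (NCMul (NCVar 1) (NCVar 1)))
  else if (1 <= j <= n)%N then NCVar j else NCConst 0.
have g_vars j : ncvars_in n (g j).
  by rewrite /g; case: ifP => [_ /= | _]; [rewrite ltnW | case: ifP].
have v_inA j : inA e (v j).
  split; first exact: utmx10.
  rewrite utmx00; case: ifP => _; last by rewrite -(scale0r 1); apply: grass_even_scalar.
  by rewrite -scaleN1r; apply: grass_even_scalar.
have w_val j : (0 < j <= n.+1)%N -> nceval c v (g j) = witness_mx e n j.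
  rewrite /g; case: eqP => [-> _ | /eqP j_neq]; last first.
    by case/andP => j_gt0; rewrite leq_eqVlt (negbTE j_neq) /= ltnS j_gt0 => ->.
  change (c 1 + c (-1) * (v 1%N * v 1%N) = witness_mx e n n.+1).
  rewrite rmorph1 rmorphN1 mulN1r /v witness_mx1 // witness_mx_last // utmx_mul.
  rewrite -utmx1 utmxB grass_sqr0 //.
  by rewrite !(mulr0, mul0r, addr0, mulN1r, opprK, subrr, subr0).
have := PI g g_vars v v_inA.
change (nceval c v (ncsubst g (f4 K m n)) = 0 -> False).
rewrite nceval_subst nceval_f4 => /(congr1 (fun M : 'M[E]_2 => M ord0 ord_max)).
rewrite (f4_witness_entry _ e_anti (grass_sqr0 ch0 grass) n_gt1 n_even w_val) mxE.
move/eqP; rewrite mulrn_eq0_pchar0 // muln_eq0 expn_eq0 (gtn_eqF (fact_gt0 n)) /=.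
exact/negP/grass_prod_neq0.
Qed.
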